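(* Let $1\le b<\frac{n}{2}-1$ and let $T$ be a tree attaining the maximum value of $M_2$ over $\mathcal{CT}^*_{n,b}$. If $T$ contains a pendent vertex adjacent to a vertex of degree $4$, then $T$ contains no two adjacent vertices of degree $3$.
   Context: A chemical tree is a tree with maximum degree at most $4$. A pendent vertex has degree $1$; a branching vertex has degree greater than $2$. $\mathcal{CT}^*_{n,b}$ is the class of all $n$-vertex chemical trees with exactly $b$ branching vertices. $M_2(G)=\sum_{uv\in E(G)}d_ud_v$, where $d_v$ is the degree of $v$. *)

From mathcomp Require Import all_boot.
Set Implicit Arguments. Unset Strict Implicit. Unset Printing Implicit Defensive.

Section Graphs.
Variable n : nat.
Implicit Types (e : rel 'I_n) (u v : 'I_n).

Definition simple_graph e := symmetric e /\ irreflexive e.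

Definition deg e u : nat := #|[set v | e u v]|.

(* edges, as unordered pairs encoded by ordered pairs with p.1 < p.2 *)
Definition edges e : {set 'I_n * 'I_n} :=
  [set p : 'I_n * 'I_n | (val p.1 < val p.2) && e p.1 p.2].

Definition is_tree e :=
  simple_graph e /\ (forall u v, connect e u v) /\ #|edges e| = n.-1.

Definition chemical_tree e := is_tree e /\ forall u, deg e u <= 4.

Definition nbranch e : nat := #|[set u | 2 < deg e u]|.

Definition CTstar (b : nat) e := chemical_tree e /\ nbranch e = b.

Definition M2 e : nat := \sum_(p in edges e) deg e p.1 * deg e p.2.

End Graphs.

From mathcomp Require Import all_boot zify.
Set Implicit Arguments. Unset Strict Implicit. Unset Printing Implicit Defensive.

(* Let xy be an edge joining two vertices of degree 3 and uv an edge from a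
   pendent vertex u to a vertex v of degree 4.  Deleting xy splits the tree in
   two; name x and y so that v lies on the side of x.  The 2-switch replacing
   xy and uv by xu and yv keeps every degree, and it reconnects the three
   pieces (the now isolated u, the side of x and v, the side of y) into a
   tree, so the result is again in CT*_{n,b}.  Only the four edges involved
   change their contribution to M2, which grows by 3*4 + 3*1 - 3*3 - 1*4 = 2,
   contradicting maximality. *)

Section EdgeSurgery.
Variable T : finType.
Implicit Types (g : rel T) (F : T * T -> nat).

Definition del_edge g c d : rel T :=
  fun a b => [&& g a b, (a, b) != (c, d) & (a, b) != (d, c)].

Definition add_edge g c d : rel T :=
  fun a b => [|| g a b, (a, b) == (c, d) | (a, b) == (d, c)].

Definition arc_sum g F : nat := \sum_(p | g p.1 p.2) F p.

Lemma del_edge_sub g c d a b : del_edge g c d a b -> g a b.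
Proof. by case/andP. Qed.

Lemma del_edgeC g c d : del_edge g c d =2 del_edge g d c.
Proof. by move=> a b; rewrite /del_edge; congr (_ && _); exact: andbC. Qed.

Lemma del_edge_sym g c d : symmetric g -> symmetric (del_edge g c d).
Proof.
move=> sg a b; rewrite /del_edge sg !xpair_eqE.
by case: (a == c); case: (a == d); case: (b == c); case: (b == d); rewrite /= ?andbF.
Qed.

Lemma add_edge_sym g c d : symmetric g -> symmetric (add_edge g c d).
Proof.
move=> sg a b; rewrite /add_edge sg !xpair_eqE.
by case: (a == c); case: (a == d); case: (b == c); case: (b == d); rewrite /= ?orbT ?orbF.
Qed.

Lemma del_edge_irr g c d : irreflexive g -> irreflexive (del_edge g c d).
Proof. by move=> ig a; rewrite /del_edge ig. Qed.

Lemma add_edge_irr g c d : irreflexive g -> c != d -> irreflexive (add_edge g c d).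
Proof.
move=> ig ncd a; rewrite /add_edge ig !xpair_eqE /=.
by case: (eqVneq a c) => [->|_]; rewrite ?(negbTE ncd) ?andbF.
Qed.

Lemma del_add_edge g c d : ~~ g c d -> ~~ g d c -> del_edge (add_edge g c d) c d =2 g.
Proof.
move=> ngcd ngdc a b; rewrite /del_edge /add_edge.
case: (eqVneq (a, b) (c, d)) => [[-> ->]|ne1]; first by rewrite (negbTE ngcd).
case: (eqVneq (a, b) (d, c)) => [[-> ->]|ne2]; first by rewrite (negbTE ngdc).
by rewrite !orbF !andbT.
Qed.

Lemma arc_sum_del_edge g c d F : g c d -> g d c -> c != d ->
  arc_sum g F = F (c, d) + F (d, c) + arc_sum (del_edge g c d) F.
Proof.
move=> gcd gdc ncd; rewrite /arc_sum (bigD1 (c, d)) //= (bigD1 (d, c)) /=; last first.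
  by rewrite gdc xpair_eqE negb_and eq_sym ncd.
by rewrite addnA; congr (_ + _); apply: eq_bigl => -[a b]; rewrite /= -andbA.
Qed.

Lemma arc_sum_add_edge g c d F : ~~ g c d -> ~~ g d c -> c != d ->
  arc_sum (add_edge g c d) F = F (c, d) + F (d, c) + arc_sum g F.
Proof.
move=> ngcd ngdc ncd; rewrite (@arc_sum_del_edge _ c d) /add_edge ?eqxx ?orbT //.
by congr (_ + _); apply: eq_bigl => -[a b]; rewrite /= del_add_edge.
Qed.

Lemma connect_del_edge g c d s w : connect g s w ->
  [\/ connect (del_edge g c d) s w, connect (del_edge g c d) c w
    | connect (del_edge g c d) d w].
Proof.
move=> /connectP [p]; elim: p s => [|z p IH] s /= => [_ ->|/andP [gsz pz] lw].
  by constructor 1.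
case: (IH z pz lw) => [czw|czw|czw]; [|by constructor 2|by constructor 3].
have [dsz|] := boolP (del_edge g c d s z).
  by constructor 1; exact: connect_trans (connect1 dsz) czw.
rewrite /del_edge gsz /= negb_and !negbK.
by case/orP=> /eqP [_ zE]; move: czw; rewrite zE; [constructor 3|constructor 2].
Qed.

Lemma connect_isolated g u w : (forall z, ~~ g u z) -> connect g u w -> w = u.
Proof.
move=> iso /connectP [[|z p] /= pp ->] //.
by case/andP: pp; rewrite (negbTE (iso z)).
Qed.

Lemma connect_del_pendant_edge g u v w : (forall z, g u z -> z = v) ->
  w != u -> connect g v w -> connect (del_edge g u v) v w.
Proof.
move=> leaf nwu /(connect_del_edge u v) [] // /connect_isolated wu.
suff iso : forall z, ~~ del_edge g u v u z by rewrite wu ?eqxx in nwu.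
move=> z; apply/negP => /and3P [guz ne _].
by rewrite (leaf z guz) eqxx in ne.
Qed.

Lemma connect_crossing g (S : {set T}) a b : a \in S -> b \notin S ->
  connect g a b -> exists c d, [/\ c \in S, d \notin S & g c d].
Proof.
move=> aS bS /connectP [p]; elim: p a aS => [|z p IH] a aS /= => [_ ba|/andP [gaz pz] lb].
  by rewrite ba aS in bS.
have [zS|zS] := boolP (z \in S); first exact: IH zS pz lb.
by exists a, z.
Qed.

End EdgeSurgery.

Section Switch.
Variable T : finType.
Implicit Types (g : rel T) (F : T * T -> nat).

Definition switch g x y u v : rel T :=
  add_edge (add_edge (del_edge (del_edge g x y) u v) v y) x u.

Definition switchable g x y u v : Prop :=
  [/\ g x y, g u v, ~~ g v y, ~~ g x u & uniq [:: x; y; u; v]].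

Variables (g : rel T) (x y u v : T).
Hypotheses (sg : symmetric g) (sw : switchable g x y u v).

Lemma switchable_neq :
  [/\ x != y, x != u, x != v & [/\ y != u, y != v & u != v]].
Proof.
case: sw => _ _ _ _; rewrite /= !inE !negb_or.
by case/and4P=> /and3P [-> -> ->] /andP [-> ->] ->.
Qed.

Lemma arc_sum_switch F :
  arc_sum (switch g x y u v) F + (F (x, y) + F (y, x)) + (F (u, v) + F (v, u))
  = arc_sum g F + (F (v, y) + F (y, v)) + (F (x, u) + F (u, x)).
Proof.
case: sw => gxy guv ngvy ngxu _; have [nxy nxu nxv [nyu nyv nuv]] := switchable_neq.
set h1 := del_edge g x y; set h2 := del_edge h1 u v; set h3 := add_edge h2 v y.
have h2g a b : h2 a b -> g a b by move/del_edge_sub/del_edge_sub.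
have E1 : arc_sum g F = F (x, y) + F (y, x) + arc_sum h1 F.
  by apply: arc_sum_del_edge; rewrite // sg.
have E2 : arc_sum h1 F = F (u, v) + F (v, u) + arc_sum h2 F.
  apply: arc_sum_del_edge nuv; rewrite /h1 /del_edge !xpair_eqE.
  - by rewrite guv (eq_sym u) (negbTE nxu) (eq_sym u) (negbTE nyu).
  - by rewrite sg guv (eq_sym v) (negbTE nxv) (eq_sym v) (negbTE nyv).
have ngyv : ~~ g y v by rewrite sg.
have ngux : ~~ g u x by rewrite sg.
have E3 : arc_sum h3 F = F (v, y) + F (y, v) + arc_sum h2 F.
  apply: arc_sum_add_edge; last by rewrite eq_sym.
  - exact: contra (h2g _ _) ngvy.
  - exact: contra (h2g _ _) ngyv.
have E4 : arc_sum (switch g x y u v) F = F (x, u) + F (u, x) + arc_sum h3 F.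
  apply: arc_sum_add_edge => //; rewrite /h3 /add_edge !xpair_eqE.
  - rewrite (negbTE nxv) (negbTE nxy) /= orbF; exact: contra (h2g _ _) ngxu.
  - rewrite (negbTE nuv) (eq_sym u) (negbTE nyu) /= orbF; exact: contra (h2g _ _) ngux.
lia.
Qed.

Lemma switch_sym : symmetric (switch g x y u v).
Proof. by do 2!apply: add_edge_sym; do 2!apply: del_edge_sym. Qed.

Lemma switch_irr : irreflexive g -> irreflexive (switch g x y u v).
Proof.
have [_ nxu _ [_ nyv _]] := switchable_neq.
move=> ig; apply: add_edge_irr nxu; apply: add_edge_irr; last by rewrite eq_sym.
by do 2!apply: del_edge_irr.
Qed.

Lemma switch_connected :
  (forall a b, connect g a b) -> connect (del_edge (del_edge g x y) u v) v x ->
  forall a b, connect (switch g x y u v) a b.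
Proof.
set h := del_edge (del_edge g x y) u v => cg chvx.
have hN s w : connect h s w -> connect (switch g x y u v) s w.
  by apply: connect_sub => a b hab; apply: connect1; rewrite /switch /add_edge -/h hab.
have cNvx := hN _ _ chvx.
have reach s : s \in [:: x; y; u; v] -> connect (switch g x y u v) v s.
  rewrite !inE => /or4P [] /eqP ->; [exact: cNvx | | | exact: connect0].
  - by apply: connect1; rewrite /switch /add_edge eqxx !orbT.
  - by apply: connect_trans cNvx (connect1 _); rewrite /switch /add_edge !eqxx !orbT.
have reach_all w : connect (switch g x y u v) v w.
  case: (connect_del_edge x y (cg x w)) => cw;
  case: (connect_del_edge u v cw) => chw; apply: connect_trans (reach _ _) (hN _ _ chw);
  by rewrite !inE eqxx ?orbT.
move=> a b; apply: connect_trans (reach_all b).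
by rewrite (sym_connect_sym switch_sym).
Qed.

End Switch.

Section Trees.
Variable n : nat.
Implicit Types (g : rel 'I_n) (F : 'I_n * 'I_n -> nat).

Lemma deg_arc_sum g a : deg g a = arc_sum g (fun p => nat_of_bool (p.1 == a)).
Proof.
rewrite /arc_sum (eq_bigl (fun p => xpredT p.1 && g p.1 p.2)) //.
rewrite -(pair_big_dep xpredT g (fun i _ => nat_of_bool (i == a))) /=.
rewrite (bigD1 a) //= [X in _ + X]big1 => [|c nca]; last first.
  by rewrite big1 // => d _; rewrite (negbTE nca).
by rewrite eqxx addn0 sum1_card /deg cardsE.
Qed.

Lemma edges_arc_sum g F : symmetric g -> irreflexive g ->
  (forall a b, F (a, b) = F (b, a)) -> 2 * \sum_(p in edges g) F p = arc_sum g F.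
Proof.
move=> sg ig sF; rewrite /arc_sum [RHS](bigID (fun p : 'I_n * 'I_n => p.1 < p.2)) /=.
have -> : \sum_(p | g p.1 p.2 && ~~ (p.1 < p.2)) F p
        = \sum_(p | g p.1 p.2 && (p.1 < p.2)) F p.
  rewrite (reindex_inj (h := fun p => (p.2, p.1))) /=; last by move=> [? ?] [? ?] [-> ->].
  apply: eq_big => -[a b] /=; last by rewrite sF.
  by rewrite sg; case: ltngtP => //= /val_inj ->; rewrite ig.
by rewrite addnn -mul2n; congr (2 * _); apply: eq_bigl => p; rewrite inE andbC.
Qed.

Lemma card_edges_arc_sum g : symmetric g -> irreflexive g ->
  2 * #|edges g| = arc_sum g (fun _ => 1).
Proof. by move=> sg ig; rewrite -sum1_card edges_arc_sum. Qed.

Lemma M2_arc_sum g : symmetric g -> irreflexive g ->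
  2 * M2 g = arc_sum g (fun p => deg g p.1 * deg g p.2).
Proof. by move=> sg ig; apply: edges_arc_sum => // a b; rewrite mulnC. Qed.

Lemma card_edges_del_edge g c d : symmetric g -> irreflexive g -> g c d ->
  #|edges (del_edge g c d)|.+1 = #|edges g|.
Proof.
move=> sg ig gcd; have ncd : c != d by apply: contraTneq gcd => ->; rewrite ig.
apply/eqP; rewrite -(eqn_pmul2l (isT : 0 < 2)) mulnS !card_edges_arc_sum //;
  last exact: del_edge_irr; last exact: del_edge_sym.
by rewrite (arc_sum_del_edge _ gcd) 1?sg.
Qed.

Definition orient (a b : 'I_n) : 'I_n * 'I_n := if val a < val b then (a, b) else (b, a).

Definition induced_edges g (S : {set 'I_n}) : {set 'I_n * 'I_n} :=
  [set p in edges g | (p.1 \in S) && (p.2 \in S)].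

Lemma induced_edges_grow g (S : {set 'I_n}) c d : symmetric g -> irreflexive g ->
  c \in S -> d \notin S -> g c d ->
  #|induced_edges g S| < #|induced_edges g (d |: S)|.
Proof.
move=> sg ig cS dS gcd.
have ncd : val c != val d by apply: contraTneq gcd => /val_inj ->; rewrite ig.
apply/proper_card/properP; split.
  by apply/subsetP => p; rewrite !inE => /and3P [-> -> ->]; rewrite !orbT.
have dc : ~~ (val c < val d) -> val d < val c by rewrite -leqNgt ltn_neqAle eq_sym ncd.
exists (orient c d); rewrite /orient; case: ifP => [cd|/negbT/dc {}dc];
  by rewrite !inE /= ?cd ?dc ?gcd ?(sg d c) ?gcd cS (negbTE dS) ?eqxx ?orbT ?andbF.
Qed.

Lemma connected_card_edges g : symmetric g -> irreflexive g ->
  (forall a b, connect g a b) -> n.-1 <= #|edges g|.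
Proof.
move=> sg ig cg.
have grow k : k < n -> exists S : {set 'I_n}, #|S| = k.+1 /\ k <= #|induced_edges g S|.
  elim: k => [|k IH] ltkn; first by exists [set Ordinal ltkn]; rewrite cards1.
  have [S [cardS leS]] := IH (ltnW ltkn).
  have [w wS] : exists w, w \notin S.
    apply/existsP; rewrite -negb_forall; apply: contraL ltkn => /forallP allS.
    have -> : k.+1 = n by rewrite -cardS -[RHS]card_ord; apply/eq_card => z; rewrite allS.
    by rewrite ltnn.
  have [r rS] : exists r, r \in S by apply/card_gt0P; rewrite cardS.
  have [c [d [cS dS gcd]]] := connect_crossing rS wS (cg r w).
  exists (d |: S); split; first by rewrite cardsU1 dS cardS.
  exact: leq_ltn_trans leS (induced_edges_grow sg ig cS dS gcd).
have [ltn|le] := ltnP n.-1 n; last by have -> : n.-1 = 0 by lia.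
have [S [_ leS]] := grow _ ltn; apply: leq_trans leS (subset_leq_card _).
by apply/subsetP => p; rewrite inE => /andP [].
Qed.

Lemma tree_del_edge_separates g x y w : is_tree g -> g x y ->
  connect (del_edge g x y) y w -> ~~ connect (del_edge g x y) x w.
Proof.
move=> [[sg ig] [cg eg]] gxy cyw; apply/negP => cxw.
have sh := del_edge_sym x y sg.
have cxy : connect (del_edge g x y) x y.
  by apply: connect_trans cxw _; rewrite (sym_connect_sym sh).
have cx b : connect (del_edge g x y) x b.
  by case: (connect_del_edge x y (cg x b)) => // cyb; exact: connect_trans cxy cyb.
have cdel a b : connect (del_edge g x y) a b.
  by apply: connect_trans (cx b); rewrite (sym_connect_sym sh).
have := connected_card_edges sh (del_edge_irr x y ig) cdel.
by rewrite -ltnS card_edges_del_edge // eg ltnn.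
Qed.

End Trees.

Section SwitchInvariants.
Variables (n : nat) (g : rel 'I_n) (x y u v : 'I_n).
Hypotheses (sg : symmetric g) (ig : irreflexive g) (sw : switchable g x y u v).

Lemma deg_switch a : deg (switch g x y u v) a = deg g a.
Proof.
have := arc_sum_switch sg sw (fun p => nat_of_bool (p.1 == a)).
rewrite -!deg_arc_sum /=; lia.
Qed.

Lemma card_edges_switch : #|edges (switch g x y u v)| = #|edges g|.
Proof.
have := arc_sum_switch sg sw (fun _ => 1).
rewrite -(card_edges_arc_sum (switch_sym x y u v sg) (switch_irr sw ig)).
rewrite -(card_edges_arc_sum sg ig); lia.
Qed.

Lemma M2_switch :
  M2 (switch g x y u v) + deg g x * deg g y + deg g u * deg g v
  = M2 g + deg g v * deg g y + deg g x * deg g u.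
Proof.
have := arc_sum_switch sg sw (fun p => deg g p.1 * deg g p.2).
have -> : arc_sum (switch g x y u v) (fun p => deg g p.1 * deg g p.2)
        = 2 * M2 (switch g x y u v).
  rewrite (M2_arc_sum (switch_sym x y u v sg) (switch_irr sw ig)).
  by apply: eq_bigr => p _; rewrite !deg_switch.
rewrite -(M2_arc_sum sg ig) /=; lia.
Qed.

Lemma CTstar_switch b : CTstar b g ->
  connect (del_edge (del_edge g x y) u v) v x -> CTstar b (switch g x y u v).
Proof.
move=> [[[_ [cg eg]] maxdeg] nb] chvx; split; last first.
  by rewrite -nb; apply: eq_card => z; rewrite !inE deg_switch.
split; last by move=> z; rewrite deg_switch.
split; first by split; [exact: switch_sym | exact: switch_irr].
by split; [exact: switch_connected | rewrite card_edges_switch].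
Qed.

End SwitchInvariants.

Lemma pendant_neighbor n (g : rel 'I_n) u v z : deg g u = 1 -> g u v -> g u z -> z = v.
Proof.
move=> /eqP/cards1P [w nbr] guv guz.
have : v \in [set b | g u b] by rewrite inE.
have : z \in [set b | g u b] by rewrite inE.
by rewrite nbr !inE => /eqP -> /eqP ->.
Qed.

Lemma switch_improves_M2 n b (g : rel 'I_n) x y u v : CTstar b g ->
  g x y -> deg g x = 3 -> deg g y = 3 -> g u v -> deg g u = 1 -> deg g v = 4 ->
  connect (del_edge g x y) x v ->
  CTstar b (switch g x y u v) /\ M2 g < M2 (switch g x y u v).
Proof.
move=> CTg gxy dx dy guv du dv cxv; have [[tree _] _] := CTg; have [[sg ig] _] := tree.
have leaf z : g u z -> z = v by exact: pendant_neighbor.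
have ne_deg a c : deg g a != deg g c -> a != c by apply: contraNneq => ->.
have nxy : x != y by apply: contraTneq gxy => ->; rewrite ig.
have distinct : uniq [:: x; y; u; v].
  by rewrite /= !inE !negb_or nxy !ne_deg ?dx ?dy ?du ?dv.
have ngvy : ~~ g v y.
  apply: contraL cxv => gvy; apply: tree_del_edge_separates gxy _ => //.
  apply: connect1; rewrite /del_edge sg gvy !xpair_eqE eqxx (eq_sym y) (negbTE nxy).
  by rewrite (negbTE (ne_deg v x _)) ?dv ?dx.
have ngxu : ~~ g x u.
  by apply/negP; rewrite sg => /leaf xv; move: dv; rewrite -xv dx.
have sw : switchable g x y u v by [].
have chvx : connect (del_edge (del_edge g x y) u v) v x.
  apply: connect_del_pendant_edge; first by move=> z /del_edge_sub /leaf.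
    by rewrite ne_deg ?dx ?du.
  by rewrite (sym_connect_sym (del_edge_sym x y sg)).
split; first exact: CTstar_switch.
by have := M2_switch sg ig sw; rewrite dx dy du dv; lia.
Qed.

Theorem lemma11 (n b : nat) (e : rel 'I_n) :
  1 <= b -> 2 * b + 2 < n ->
  CTstar b e ->
  (forall e' : rel 'I_n, CTstar b e' -> M2 e' <= M2 e) ->
  (exists u v : 'I_n, [/\ e u v, deg e u = 1 & deg e v = 4]) ->
  ~ (exists x y : 'I_n, [/\ e x y, deg e x = 3 & deg e y = 3]).
Proof.
move=> _ _ CTe maxM2 [u [v [euv du dv]]] [x [y [exy dx dy]]].
have [[[[se _] [ce _]] _] _] := CTe.
suff [e' [CTe' ltM2]] : exists e' : rel 'I_n, CTstar b e' /\ M2 e < M2 e'.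
  by rewrite ltnNge maxM2 in ltM2.
case: (connect_del_edge x y (ce x v)) => cv; last first.
  exists (switch e y x u v); apply: switch_improves_M2 CTe _ dy dx euv du dv _.
  - by rewrite se.
  - by rewrite (eq_connect (del_edgeC e y x)).
all: by exists (switch e x y u v); apply: switch_improves_M2 CTe exy dx dy euv du dv cv.
Qed.
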